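(* Let $\mathcal{L}$ be a Lie algebra over $\mathbf{k}$, $k\in\mathbf{k}$ nonzero, and let $((\mathcal{U},q),i)$ be the enveloping$^{6\text{-th}}$ algebra of $\mathcal{L}$. Then there exists a unique invariant anti-homomorphism $S$ of $(\mathcal{U},q)$ such that $S(q)=1-q$ and $S(i(x))=-\frac1k i(x)-k\,q\,i(x)+\frac1k i(x)q$ for all $x\in\mathcal{L}$.
   Context: Invariant algebra: for an associative algebra $A$ with identity and idempotent $q$, $(A,q)=\{x\in A: qxq=qx\}$; $\mathrm{Lie}(A,q)$ is $(A,q)$ with bracket $[x,y]_{6,k}=xy-yx-xyq+yxq+kxqy-kyqx$; invariant homomorphisms are unital multiplicative linear maps preserving the distinguished idempotents. The enveloping$^{6\text{-th}}$ algebra $((\mathcal{U},q),i)$: $(\mathcal{U},q)$ an invariant algebra, $i:\mathcal{L}\to\mathrm{Lie}(\mathcal{U},q)$ a Lie homomorphism, such that every Lie homomorphism $f:\mathcal{L}\to\mathrm{Lie}(A,q_A)$ into an invariant algebra factors uniquely as $f=f'\circ i$ with $f'$ an invariant homomorphism; here $(\mathcal{U},q)=\mathcal{U}$. For an invariant algebra $(A,q)$, the opposite invariant algebra is $(\mathring A,1-q)$ where $\mathring A=A$ with product $x\circ y=yx$. An invariant anti-homomorphism of $(A,q)$ is an invariant homomorphism $(A,q)\to(\mathring A,1-q)$, i.e. a linear map $S$ with $S(xy)=S(y)S(x)$, $S(1)=1$, $S(q)=1-q$. *)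

From HB Require Import structures.
From mathcomp Require Import all_boot all_order all_algebra.
Set Implicit Arguments. Unset Strict Implicit. Unset Printing Implicit Defensive.
Import GRing.Theory.
Local Open Scope ring_scope.

Definition lie_bracket (F : fieldType) (L : lmodType F) (br : L -> L -> L) : Prop :=
  [/\ (forall (a : F) (x y z : L), br (a *: x + y) z = a *: br x z + br y z),
      (forall (a : F) (x y z : L), br x (a *: y + z) = a *: br x y + br x z),
      (forall x : L, br x x = 0)
    & (forall x y z : L, br x (br y z) + br y (br z x) + br z (br x y) = 0)].

Definition is_linear (F : fieldType) (V W : lmodType F) (f : V -> W) : Prop :=
  forall (a : F) (x y : V), f (a *: x + y) = a *: f x + f y.

Definition idempotent (F : fieldType) (A : algType F) (q : A) : Prop := q * q = q.

(* membership in the invariant algebra (A,q) = {x | q x q = q x} *)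
Definition inv_mem (F : fieldType) (A : algType F) (q x : A) : Prop := q * x * q = q * x.

Definition bracket6 (F : fieldType) (A : algType F) (k : F) (q x y : A) : A :=
  x * y - y * x - x * y * q + y * x * q + k *: (x * q * y) - k *: (y * q * x).

Definition lie_hom6 (F : fieldType) (L : lmodType F) (br : L -> L -> L)
    (k : F) (A : algType F) (q : A) (f : L -> A) : Prop :=
  [/\ is_linear f, (forall x, inv_mem q (f x))
    & (forall x y, f (br x y) = bracket6 k q (f x) (f y))].

Definition inv_hom (F : fieldType) (U B : algType F) (qU : U) (qB : B) (g : U -> B) : Prop :=
  [/\ is_linear g, (forall x y, g (x * y) = g x * g y), g 1 = 1 & g qU = qB].

(* ((U,q),i) is the enveloping^{6-th} algebra of (L,br) (for the parameter k),
   with (U,q) = U, i.e. every element of U lies in the invariant algebra. *)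
Definition enveloping6 (F : fieldType) (L : lmodType F) (br : L -> L -> L)
    (k : F) (U : algType F) (q : U) (i : L -> U) : Prop :=
  [/\ idempotent q, (forall x : U, inv_mem q x), lie_hom6 br k q i
    & forall (B : algType F) (qB : B), idempotent qB ->
        forall f : L -> B, lie_hom6 br k qB f ->
          exists! g : U -> B, inv_hom q qB g /\ (forall x, f x = g (i x))].

(* invariant anti-homomorphism of (U,q): an invariant homomorphism
   (U,q) -> (opposite U, 1-q) *)
Definition inv_antihom (F : fieldType) (U : algType F) (q : U) (S : U -> U) : Prop :=
  [/\ is_linear S, (forall x y, S (x * y) = S y * S x), S 1 = 1 & S q = 1 - q].

From Pilot Require Import Defs.
From HB Require Import structures.
From mathcomp Require Import all_boot all_order all_algebra.
Import GRing.Theory.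
Local Open Scope ring_scope.

(* Put p := 1 - q.  An invariant anti-homomorphism of (U,q) is
   the same thing as an invariant homomorphism (U,q) -> (U°,p), where U° is
   the opposite algebra.  By the universal property of the enveloping
   algebra it therefore suffices to check that the "antipode"
       phi(z) := -(1/k) z p - k q z,
   which agrees with the prescribed value on each i(x), turns i into a Lie
   homomorphism L -> Lie(U°,p): the invariant homomorphism factoring phi o i
   through i is then the required S, and its uniqueness gives uniqueness.
   Since every z in U satisfies q z q = q z, we have q z p = 0 and
   p z p = z p; with these identities phi becomes a Lie homomorphism
   Lie(U,q) -> Lie(U°,p) (lemma antipode_bracket6). *)

Section OppositeAlgebra.
Variables (F : fieldType) (U : algType F).

Definition opp_alg : Type := U^c.

HB.instance Definition _ := GRing.NzRing.on opp_alg.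
HB.instance Definition _ := GRing.Zmodule_isLmodule.Build F opp_alg
  (fun a b v => @scalerA F U a b v) (@scale1r F U) (@scalerDr F U)
  (fun v => @scalerDl F U v).

Lemma opp_alg_scalerAl (a : F) (u v : opp_alg) : a *: (u * v) = (a *: u) * v.
Proof. exact: (@scalerAr F U a v u). Qed.
HB.instance Definition _ :=
  GRing.Lmodule_isLalgebra.Build F opp_alg opp_alg_scalerAl.

Lemma opp_alg_scalerAr (a : F) (u v : opp_alg) : a *: (u * v) = u * (a *: v).
Proof. exact: (@scalerAl F U a v u). Qed.
HB.instance Definition _ :=
  GRing.Lalgebra_isAlgebra.Build F opp_alg opp_alg_scalerAr.

Lemma inv_antihom_homE (q : U) (S : U -> U) :
  inv_antihom q S <-> inv_hom q (1 - q : opp_alg) S.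
Proof. by split=> -[]; split. Qed.

End OppositeAlgebra.
Arguments opp_alg {F} U.

Section ComplementIdempotent.
Variables (F : fieldType) (U : algType F) (q : U).
Hypothesis q_inv : forall z : U, inv_mem q z.

Local Notation p := (1 - q).

(* Idempotency of q is already forced by (U,q) = U, taking z = 1. *)
Lemma q_idempotent : q * q = q.
Proof. by have := q_inv 1; rewrite /inv_mem !mulr1. Qed.

Lemma q_z_p (z : U) : q * z * p = 0.
Proof. by rewrite mulrBr mulr1 q_inv subrr. Qed.

Lemma p_z_p (z : U) : p * z * p = z * p.
Proof. by rewrite [in LHS]mulrBl mul1r mulrBl q_z_p subr0. Qed.

Lemma p_q : p * q = 0.
Proof. by rewrite mulrBl mul1r q_idempotent subrr. Qed.

Lemma p_p : p * p = p.
Proof. by have := p_z_p 1; rewrite mulr1 mul1r. Qed.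

Lemma opp_compl_idempotent : Defs.idempotent (p : opp_alg U).
Proof. exact: p_p. Qed.

Lemma opp_compl_inv_mem (z : U) : inv_mem (p : opp_alg U) (z : opp_alg U).
Proof. by rewrite /inv_mem; change (p * (z * p) = z * p); rewrite mulrA p_z_p. Qed.

Lemma bracket6_compl (k : F) (a b : U) :
  bracket6 k q a b = (a * b - b * a) * p + k *: (a * q * b - b * q * a).
Proof.
rewrite /bracket6 mulrBr mulr1 mulrBl scalerBr opprB !addrA.
by congr (_ + _ + _); rewrite addrAC.
Qed.

Lemma opp_bracket6E (k : F) (a b : U) :
  bracket6 k (p : opp_alg U) a b =
  q * (b * a) - q * (a * b) + k *: (b * p * a) - k *: (a * p * b).
Proof.
rewrite /bracket6; change (b * a - a * b - p * (b * a) + p * (a * b)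
  + k *: (b * (p * a)) - k *: (a * (p * b)) =
  q * (b * a) - q * (a * b) + k *: (b * p * a) - k *: (a * p * b)).
rewrite (mulrBl (b * a)) (mulrBl (a * b)) !mul1r !mulrA; congr (_ + _ - _).
by rewrite opprB [_ - _ + (_ - _)]addrC !subrKA.
Qed.

Variable k : F.

Definition antipode (z : U) : U := - (k^-1 *: (z * p)) - k *: (q * z).

Lemma antipode_prescribed (z : U) :
  - (k^-1 *: z) - k *: (q * z) + k^-1 *: (z * q) = antipode z.
Proof. by rewrite /antipode mulrBr mulr1 scalerBr opprB addrC addrA. Qed.

Lemma antipode_linear : is_linear antipode.
Proof.
move=> c a b; rewrite /antipode (mulrDl _ _ p) (mulrDr q) -scalerAl -scalerAr.
rewrite !scalerDr !scalerN !scalerA (mulrC k^-1) (mulrC k) -!scalerA.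
by rewrite !opprD addrACA.
Qed.

Lemma antipodeD (a b : U) : antipode (a + b) = antipode a + antipode b.
Proof. by have := antipode_linear 1 a b; rewrite !scale1r. Qed.

Lemma antipodeZ (c : F) (a : U) : antipode (c *: a) = c *: antipode a.
Proof.
have antipode0 : antipode 0 = 0 by rewrite /antipode mul0r mulr0 !scaler0 subr0 oppr0.
by have := antipode_linear c a 0; rewrite antipode0 !addr0.
Qed.

Lemma antipodeB (a b : U) : antipode (a - b) = antipode a - antipode b.
Proof. by have := antipode_linear (-1) b a; rewrite !scaleN1r addrC => ->; rewrite addrC. Qed.

Lemma antipode_mul_p (z : U) : antipode z * p = - (k^-1 *: (z * p)).
Proof.
by rewrite /antipode mulrBl mulNr -!scalerAl -!mulrA p_p mulrA q_z_p scaler0 subr0.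
Qed.

Lemma q_antipode (z a : U) : q * z * antipode a = - (k *: (q * z * a)).
Proof.
rewrite /antipode mulrBr mulrN -!scalerAr !mulrA -(mulrA q z a) q_z_p q_inv.
by rewrite scaler0 oppr0 add0r mulrA.
Qed.

Lemma p_antipode (z a : U) : z * p * antipode a = - (k^-1 *: (z * a * p)).
Proof.
rewrite /antipode mulrBr mulrN -!scalerAr !mulrA -(mulrA z p a) -(mulrA z (p * a) p).
by rewrite p_z_p mulrA -(mulrA z p q) p_q mulr0 mul0r scaler0 subr0.
Qed.

Lemma q_antipode_antipode (a b : U) :
  q * (antipode b * antipode a) = (k * k) *: (q * (b * a)).
Proof.
have := q_antipode 1 b; rewrite !mulr1 => q_phi_b.
rewrite mulrA q_phi_b mulNr -scalerAl q_antipode scalerN opprK scalerA.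
by rewrite mulrA.
Qed.

Lemma antipode_p_antipode (a b : U) :
  antipode b * p * antipode a = (k^-1 * k^-1) *: (b * a * p).
Proof.
by rewrite antipode_mul_p mulNr -scalerAl p_antipode scalerN opprK scalerA.
Qed.

Lemma antipode_mul_compl (z : U) : antipode (z * p) = - (k^-1 *: (z * p)).
Proof. by rewrite /antipode -mulrA p_p mulrA q_z_p scaler0 subr0. Qed.

Lemma antipode_q_mid (a b : U) : antipode (a * q * b) = - (k *: (q * (a * b))).
Proof.
rewrite /antipode -(mulrA a q b) -(mulrA a (q * b) p) q_z_p mulr0 scaler0 oppr0.
by rewrite add0r !mulrA q_inv.
Qed.

Hypothesis hk : k != 0.

(* Main computation: phi is a Lie homomorphism Lie(U,q) -> Lie(U°,1-q).
   Both sides reduce to k^2 q(ba - ab) + (1/k)(ba - ab)p. *)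
Lemma antipode_bracket6 (a b : U) :
  antipode (bracket6 k q a b) =
  bracket6 k (p : opp_alg U) (antipode a) (antipode b).
Proof.
rewrite bracket6_compl opp_bracket6E antipodeD antipode_mul_compl antipodeZ.
rewrite antipodeB !antipode_q_mid !q_antipode_antipode !antipode_p_antipode.
have k_kVV : k * (k^-1 * k^-1) = k^-1 by rewrite mulrA mulfV // mul1r.
rewrite !scalerA k_kVV mulrBl scalerBr opprB scalerBr !scalerN !scalerA opprK.
by rewrite addrC -[RHS]addrA (addrC (- _)).
Qed.

Lemma antipode_lie_hom6 (L : lmodType F) (br : L -> L -> L) (i : L -> U) :
  lie_hom6 br k q i ->
  lie_hom6 br k (p : opp_alg U) (fun x => antipode (i x) : opp_alg U).
Proof.
case=> i_lin _ i_br; split=> [c x y | x | x y].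
- by rewrite i_lin antipode_linear.
- exact: opp_compl_inv_mem.
- by rewrite i_br antipode_bracket6.
Qed.

End ComplementIdempotent.
Arguments opp_compl_idempotent {F U q}.
Arguments antipode_lie_hom6 {F U q} q_inv {k} hk {L br i}.

Theorem proposition7p1 (F : fieldType) (L : lmodType F) (br : L -> L -> L)
    (hL : lie_bracket br) (k : F) (hk : k != 0)
    (U : algType F) (q : U) (i : L -> U) (hU : enveloping6 br k q i) :
  exists! S : U -> U,
    [/\ inv_antihom q S, S q = 1 - q
      & forall x : L,
          S (i x) = - (k^-1 *: i x) - k *: (q * i x) + k^-1 *: (i x * q)].
Proof.
case: hU => _ q_inv i_lie univ.
have [S [[S_hom S_i] S_unique]] :=
  univ _ _ (opp_compl_idempotent q_inv) _ (antipode_lie_hom6 q_inv hk i_lie).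
exists S; split.
  split=> [|| x]; first exact/inv_antihom_homE.
  - by case: S_hom.
  - by rewrite antipode_prescribed S_i.
move=> T [T_anti _ T_i]; apply: S_unique; split; first exact/inv_antihom_homE.
by move=> x; rewrite T_i antipode_prescribed.
Qed.
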